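(* (Brzozowski soundness of follow maps.) Let $\mathcal{V}$ be a finite token vocabulary, let $\mathcal{Q}$ be a query with constraint expression $\texttt{where}_\mathcal{Q}$, and let $L_\mathcal{Q} = \{ s \in \mathcal{V}^* \mid \texttt{where}_\mathcal{Q} \text{ evaluates to } \top \text{ on the variable store obtained by parsing } s \text{ according to } \mathcal{Q}\}$. Let $u \in \mathcal{V}^*$ be a partial interaction trace, let $T_\mathcal{Q} = \{ t \in \mathcal{V} \mid (ut)^{-1} L_\mathcal{Q} \neq \emptyset \}$ be the set of Brzozowski-admissible tokens, where for a prefix $w$ the Brzozowski derivative is $w^{-1}L_\mathcal{Q} = \{ p \in \mathcal{V}^* \mid wp \in L_\mathcal{Q}\}$, and let $M := \{ t \in \mathcal{V} \mid \mathrm{Follow}[\texttt{where}_\mathcal{Q}](u,t) \neq \mathrm{fin}(\bot)\}$ be the set of tokens allowed by the follow map. Then $T_\mathcal{Q} \subseteq M$.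
   Context: Setting: constrained decoding of a language model. A query $\mathcal{Q}$ produces an interaction trace, a string over the token vocabulary $\mathcal{V}$; hole variables of the query are filled by model-generated tokens, and the boolean constraint expression $\texttt{where}_\mathcal{Q}$ is evaluated on the variable store determined by a (possibly partial) trace. For a partial trace $w$ whose currently decoded hole variable is $v$, write $[\![ e ]\!]_{v \leftarrow w}$ for the evaluation of expression $e$ with $v$ assigned according to $w$. Final semantics: evaluation returns a value together with an annotation in $\{\mathrm{fin}, \mathrm{var}, \mathrm{inc}, \mathrm{dec}\}$ (fixed, may still change, monotonically increasing, monotonically decreasing as decoding continues). In particular, $[\![ e ]\!]_{v \leftarrow w} = \mathrm{fin}(\bot)$ means that $e$ evaluates to False on $w$ and on every extension $wp$, $p \in \mathcal{V}^*$, i.e. there is no $p \in \mathcal{V}^*$ with $[\![ e ]\!]_{v \leftarrow wp} \neq \bot$. Follow operator: $\mathrm{Follow}[e](u,t)$ (a ''follow map'') takes the partial trace $u$ and a candidate next token $t \in \mathcal{V}$ and returns an annotated approximation of the value of $e$ if $ut$ is validated next. It is sound in the sense that for every $t \in \mathcal{V}$, $\mathrm{Follow}[e](u,t) = \mathrm{fin}(\bot)$ implies $[\![ e ]\!]_{v \leftarrow ut} = \mathrm{fin}(\bot)$, where $v$ is the currently decoded hole variable. *)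

From mathcomp Require Import all_boot.
Set Implicit Arguments. Unset Strict Implicit. Unset Printing Implicit Defensive.

(* Annotations of the final semantics: fixed, variable, increasing, decreasing. *)
Inductive annot : Type := Fin | Var | Inc | Dec.

(* An annotated value, e.g. fin(b) = (Fin, b). Constraint expressions are boolean. *)
Definition aval := (annot * bool)%type.

Definition fin_bot : aval := (Fin, false).

(* Final-semantics property of an annotated evaluator [ev] (ev w = [[e]]_{v<-w}):
   fin(bot) means False on w and on every extension wp. *)
Definition final_sound (V : Type) (ev : seq V -> aval) : Prop :=
  forall w : seq V, ev w = fin_bot ->
    ~ exists p : seq V, (ev (w ++ p)).2 <> false.

Definition follow_sound (V : Type) (ev : seq V -> aval)
  (follow : seq V -> V -> aval) (u : seq V) : Prop :=
  forall t : V, follow u t = fin_bot -> ev (rcons u t) = fin_bot.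

Definition LQ (V Store : Type) (parse : seq V -> Store) (where_ : Store -> bool)
  (s : seq V) : Prop := where_ (parse s) = true.

Definition brz_deriv (V : Type) (L : seq V -> Prop) (w : seq V) : seq V -> Prop :=
  fun p => L (w ++ p).

Definition brz_admissible (V : Type) (L : seq V -> Prop) (u : seq V) : V -> Prop :=
  fun t => exists p, brz_deriv L (rcons u t) p.

Definition follow_allowed (V : Type) (follow : seq V -> V -> aval) (u : seq V) : V -> Prop :=
  fun t => follow u t <> fin_bot.

From mathcomp Require Import all_boot.

Set Implicit Arguments.
Unset Strict Implicit.
Unset Printing Implicit Defensive.

Section FinalSemantics.

Variables (V : Type) (ev : seq V -> aval) (L : seq V -> Prop).

Hypothesis ev_final : final_sound ev.
Hypothesis ev_true_of_mem : forall s, L s -> (ev s).2 = true.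

Lemma brz_deriv_fin_bot w : ev w = fin_bot -> forall p, ~ brz_deriv L w p.
Proof.
move=> ev_w p Lwp; apply: (ev_final ev_w); exists p.
by rewrite ev_true_of_mem.
Qed.

End FinalSemantics.

Lemma ev_true_of_LQ (V Store : Type) (parse : seq V -> Store)
    (where_ : Store -> bool) (ev : seq V -> aval) :
  (forall s, (ev s).2 = where_ (parse s)) ->
  forall s, LQ parse where_ s -> (ev s).2 = true.
Proof. by move=> ev_consistent s; rewrite /LQ ev_consistent. Qed.

Theorem mainTheorem1
  (V : finType) (Store : Type)
  (parse : seq V -> Store) (where_ : Store -> bool)
  (ev : seq V -> aval)
  (ev_consistent : forall s : seq V, (ev s).2 = where_ (parse s))
  (ev_final : final_sound ev)
  (follow : seq V -> V -> aval) (u : seq V)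
  (follow_ok : follow_sound ev follow u) :
  forall t : V,
    brz_admissible (LQ parse where_) u t -> follow_allowed follow u t.
Proof.
move=> t [p ut_p_in_LQ] follow_bot.
have ev_true := ev_true_of_LQ ev_consistent.
exact: (brz_deriv_fin_bot ev_final ev_true (follow_ok t follow_bot) ut_p_in_LQ).
Qed.
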